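(* Let $G=(V,E)$ be a connected cograph with at least two vertices. Then $|\mathrm{core}(G)|\le 1$, and if $\mathrm{core}(G)=\{w\}$ then $\gamma(G-w)>\gamma(G)$ (i.e. $\mathrm{core}(G)\subseteq V^+$).
   Context: All graphs are finite, simple and undirected. A cograph is a graph with no induced path on four vertices ($P_4$-free graph). $\gamma(G)$ is the domination number; a minimum dominating set (mds) is a dominating set of size $\gamma(G)$; $\mathrm{core}(G)$ is the set of vertices in every mds. $G-w$ is $G$ with $w$ deleted and $V^+=\{v:\gamma(G-v)>\gamma(G)\}$. *)

From mathcomp Require Import all_boot.
Set Implicit Arguments. Unset Strict Implicit. Unset Printing Implicit Defensive.

Section Graphs.
Variable T : finType.

Definition simple_graph (e : rel T) : Prop := irreflexive e /\ symmetric e.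

(* P4-free: no four distinct vertices a-b-c-d inducing a path. *)
Definition cograph (e : rel T) : Prop :=
  forall a b c d : T,
    a != b -> a != c -> a != d -> b != c -> b != d -> c != d ->
    ~ [/\ e a b, e b c, e c d & [&& ~~ e a c, ~~ e b d & ~~ e a d]].

Definition connected_graph (e : rel T) : Prop := forall x y : T, connect e x y.

(* Domination in the induced subgraph G[S] (G = G[setT], G - w = G[setT :\ w]). *)
Definition dominating (e : rel T) (S D : {set T}) : bool :=
  (D \subset S) && [forall x in S, (x \in D) || [exists y in D, e x y]].

(* domination number of G[S] (S itself dominates, so the min is attained) *)
Definition gamma (e : rel T) (S : {set T}) : nat :=
  \big[minn/#|S|]_(D : {set T} | dominating e S D) #|D|.

Definition mds (e : rel T) (S D : {set T}) : bool :=
  dominating e S D && (#|D| == gamma e S).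

Definition core (e : rel T) (S : {set T}) : {set T} :=
  [set v in S | [forall D : {set T}, mds e S D ==> (v \in D)]].

End Graphs.

(* A connected cograph on at least two vertices has a disconnected complement
   (Seinsche), so [V] splits into a complement component [C] and its
   complement, with every vertex of [C] adjacent to every vertex outside [C].
   Any such cross pair dominates, so [gamma G <= 2].  If no single vertex
   dominates, every vertex [v] is avoided by some cross pair (each side has a
   vertex other than [v], or [v] would dominate), so the core is empty.
   Otherwise [gamma G = 1], the core lies in every dominating vertex, and if it
   is [{u}] then no vertex dominates [G - u]: it would be adjacent to [u] and
   dominate [G]. *)

From mathcomp Require Import all_boot all_order.
Set Implicit Arguments. Unset Strict Implicit. Unset Printing Implicit Defensive.
Import Order.TTheory.

Section Connectivity.
Variable T : finType.
Implicit Types (r e : rel T) (P : pred T) (S X : {set T}).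

Definition induced e S : rel T := fun x y => [&& x \in S, y \in S & e x y].

Definition connected_in e S : Prop :=
  forall x y, x \in S -> y \in S -> connect (induced e S) x y.

Lemma induced_setT e : induced e [set: T] =2 e.
Proof. by move=> x y; rewrite /induced !in_setT. Qed.

Lemma connect_cross r P x y :
  connect r x y -> P x -> ~~ P y ->
  exists u w, [/\ connect r x u, r u w, P u & ~~ P w].
Proof.
case/connectP => p; elim: p x => [|z p IH] x /=; first by move=> _ -> ->.
case/andP => rxz pzp ylast Px NPy; case Pz: (P z).
- have [u [w [czu ruw Pu NPw]]] := IH z pzp ylast Pz NPy.
  by exists u, w; split => //; apply: connect_trans (connect1 rxz) czu.
- by exists x, z; rewrite connect0 Pz.
Qed.

Lemma connect_induced_mem e S x y :
  connect (induced e S) x y -> x \in S -> y \in S.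
Proof.
move=> cxy xS; apply/negPn/negP => yS.
by have [u [w [_ /and3P[_ wS _] _ /negP]]] := connect_cross (P := mem S) cxy xS yS.
Qed.

Lemma component_closed e S t u w : t \in S ->
  connect (induced e S) t u -> w \in S -> e u w -> connect (induced e S) t w.
Proof.
move=> tS ctu wS euw; have uS := connect_induced_mem ctu tS.
by apply: connect_trans ctu (connect1 _); rewrite /induced uS wS euw.
Qed.

Lemma disconnected_pair e S : ~ connected_in e S ->
  exists a c, [/\ a \in S, c \in S & ~~ connect (induced e S) a c].
Proof.
move=> nconn.
case: (boolP [exists a in S, exists c in S, ~~ connect (induced e S) a c]).
  by case/exists_inP => a aS /exists_inP[c cS nac]; exists a, c.
move/exists_inPn => conn; exfalso; apply: nconn => x y xS yS.
by have /exists_inPn/(_ y yS)/negbNE := conn x xS.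
Qed.

Lemma connected_in_exit e S X x y :
  connected_in e S -> X \subset S -> x \in X -> y \in S -> y \notin X ->
  exists u w, [/\ u \in X, w \in S :\: X & e u w].
Proof.
move=> conn /subsetP XS xX yS yX.
have [u [w [_ /and3P[_ wS euw] uX wX]]] :=
  connect_cross (P := mem X) (conn x y (XS x xX) yS) xX yX.
by exists u, w; rewrite inE wX wS.
Qed.

Lemma adj_removed_vertex e S X v x :
  connected_in e S -> v \in S -> X \subset S :\ v -> x \in X ->
  (forall u w, u \in X -> w \in (S :\ v) :\: X -> ~~ e u w) ->
  exists2 u, u \in X & e u v.
Proof.
move=> conn vS XSv xX closedX.
have XS : X \subset S by apply: subset_trans XSv (subD1set S v).
have vX : v \notin X by apply/negP => /(subsetP XSv); rewrite !inE eqxx.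
have [u [w [uX /setDP[wS wX] euw]]] := connected_in_exit conn XS xX vS vX.
exists u => //; case: (eqVneq w v) => [<- //|wv].
by move: euw; rewrite (negbTE (closedX u w uX _)) // !inE wX wv.
Qed.

End Connectivity.

Section Cographs.
Variable T : finType.
Implicit Types (e : rel T) (S : {set T}).

Definition compl_rel e : rel T := fun x y => (x != y) && ~~ e x y.

Lemma compl_simple e : simple_graph e -> simple_graph (compl_rel e).
Proof.
move=> [_ sym]; split; first by move=> x; rewrite /compl_rel eqxx.
by move=> x y; rewrite /compl_rel eq_sym sym.
Qed.

Lemma compl_relK e : irreflexive e -> compl_rel (compl_rel e) =2 e.
Proof.
move=> irr x y; rewrite /compl_rel; case: eqVneq => [->|_] /=; last by rewrite negbK.
by rewrite irr.
Qed.

Lemma connected_in_complK e S : irreflexive e ->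
  connected_in e S -> connected_in (compl_rel (compl_rel e)) S.
Proof.
move=> irr conn x y xS yS; rewrite (@eq_connect _ _ (induced e S)) ?conn //.
by move=> u w; rewrite /induced compl_relK.
Qed.

(* In a simple graph the six non-edge/edge conditions already force the four
   vertices of a [P4] to be distinct. *)
Lemma cograph_noP4 e a b c d : simple_graph e -> cograph e ->
  e a b -> e b c -> e c d -> ~~ e a c -> ~~ e b d -> ~~ e a d -> False.
Proof.
move=> [irr sym] cog eab ebc ecd nac nbd nad.
have edge_neq x y : e x y -> x != y by apply: contraTneq => ->; rewrite irr.
have ac : a != c by apply: contraNneq nad => ->.
have ad : a != d by apply: contraNneq nac => ->; rewrite sym.
have bd : b != d by apply: contraNneq nad => <-.
apply: (cog a b c d (edge_neq _ _ eab) ac ad (edge_neq _ _ ebc) bd (edge_neq _ _ ecd)).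
by split; rewrite // nac nbd nad.
Qed.

Lemma compl_cograph e : simple_graph e -> cograph e -> cograph (compl_rel e).
Proof.
move=> [irr sym] cog a b c d ab ac ad bc bd cd [].
rewrite /compl_rel ab bc cd ac bd ad /= !negbK => nab nbc ncd /and3P[eac ebd ead].
by apply: (cograph_noP4 (conj irr sym) cog (a := c) (b := a) (c := d) (d := b));
  rewrite // sym.
Qed.

Lemma universal_compl_disconnected e S v a :
  v \in S -> a \in S :\ v -> (forall t, t \in S :\ v -> e v t) ->
  ~ connected_in (compl_rel e) S.
Proof.
move=> vS aSv univ conn; have /setD1P[av aS] := aSv.
have [u [w [_ /and3P[_ wS /andP[_ nuw]] /eqP uv wv]]] :=
  connect_cross (P := pred1 v) (conn v a vS aS) (eqxx v) av.
by move: nuw; rewrite uv univ // !inE wv.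
Qed.

(* The component [D] of a non-neighbour [t] of [v] in [G[S] - v] contains a
   neighbour of [v], and so does the rest of [G[S] - v]; an edge [u w] of [D]
   with [u] a non-neighbour and [w] a neighbour of [v] then yields the [P4]
   [u - w - v - c'] for any neighbour [c'] of [v] outside [D]. *)
Lemma cograph_cut_vertex_universal e S v a c :
  simple_graph e -> cograph e -> v \in S -> connected_in e S ->
  a \in S :\ v -> c \in S :\ v -> ~~ connect (induced e (S :\ v)) a c ->
  forall t, t \in S :\ v -> e v t.
Proof.
move=> sg cog vS conn aS' cS' nac t tS'; have [_ sym] := sg.
apply/negPn/negP => nvt; set S' := S :\ v.
set D := [set u | connect (induced e S') t u].
have tD : t \in D by rewrite inE connect0.
have DS' : D \subset S' by apply/subsetP => u; rewrite inE => /connect_induced_mem; apply.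
have D_closed u w : u \in D -> w \in S' -> e u w -> w \in D.
  by rewrite [_ \in D]inE => ctu wS' euw; rewrite inE (component_closed tS' ctu).
have csym : connect_sym (induced e S').
  by apply: sym_connect_sym => x y; rewrite /induced sym andbCA.
have [r rS' rD] : exists2 r, r \in S' & r \notin D.
  case aD: (a \in D); last by exists a; rewrite ?aD.
  exists c => //; apply: contra nac; rewrite !inE csym in aD * => ctc.
  exact: connect_trans aD ctc.
have [b bD ebv] : exists2 b, b \in D & e b v.
  apply: adj_removed_vertex conn vS DS' tD _ => u w uD /setDP[wS' wD].
  by apply: contra wD; apply: D_closed.
have [c' /setDP[c'S' c'D] ec'v] : exists2 c', c' \in S' :\: D & e c' v.
  apply: (adj_removed_vertex (x := r)) conn vS (subsetDl S' D) _ _; first exact/setDP.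
  move=> u w /setDP[uS' uD] /setDP[wS']; rewrite in_setD wS' andbT negbK => wD.
  by apply: contra uD; rewrite sym; apply: D_closed.
have ctb : connect (induced e S') t b by rewrite inE in bD.
have nnvb : ~~ ~~ e v b by rewrite negbK sym.
have [u [w [ctu /and3P[_ wS' euw] /= nvu]]] :=
  connect_cross (P := fun u => ~~ e v u) ctb nvt nnvb.
rewrite negbK => evw.
have uD : u \in D by rewrite inE.
have wD : w \in D := D_closed u w uD wS' euw.
have not_adj_c' x : x \in D -> ~~ e x c'.
  by move=> xD; apply: contra c'D; apply: D_closed.
by apply: (cograph_noP4 sg cog euw (_ : e w v) (_ : e v c'));
  rewrite ?not_adj_c' // sym.
Qed.

Lemma cograph_cut_vertex_compl e S v :
  simple_graph e -> cograph e -> v \in S -> connected_in e S ->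
  ~ connected_in e (S :\ v) -> ~ connected_in (compl_rel e) S.
Proof.
move=> sg cog vS conn /disconnected_pair[a [c [aS' cS' nac]]].
exact: universal_compl_disconnected vS aS'
  (cograph_cut_vertex_universal sg cog vS conn aS' cS' nac).
Qed.

(* Seinsche.  By induction [G[S] - v] or its complement is disconnected, and
   then [v] disconnects the complement of [G[S]] or [G[S]] itself. *)
Lemma cograph_connected_compl_disconnected e S :
  simple_graph e -> cograph e -> 1 < #|S| ->
  connected_in e S -> ~ connected_in (compl_rel e) S.
Proof.
move=> + + S2; have [n] : exists n, #|S| = n.+2 by case: #|S| S2 => [|[|k]] //; exists k.
elim: n e S {S2} => [|n IH] e S cardS sg cog conn connC; have [irr _] := sg.
all: have [v vS] : exists v, v \in S by apply/set0Pn; rewrite -card_gt0 cardS.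
all: have /eqP cardSv : #|S :\ v|.+1 == #|S| by rewrite (cardsD1 v S) vS.
- have /cards1P[a Sva] : #|S :\ v| == 1 by rewrite -eqSS cardSv cardS.
  have aSv : a \in S :\ v by rewrite Sva set11.
  have /setD1P[av _] := aSv.
  have univ f : f v a -> forall t, t \in S :\ v -> f v t.
    by move=> fva t; rewrite Sva => /set1P->.
  case: (boolP (e v a)) => eva.
    exact: universal_compl_disconnected vS aSv (univ e eva) connC.
  apply: universal_compl_disconnected vS aSv (univ (compl_rel e) _)
    (connected_in_complK irr conn).
  by rewrite /compl_rel eva eq_sym av.
- have disconnectedCSv : ~ connected_in (compl_rel e) (S :\ v).
    have /(IH e _)/(_ sg cog) IHv : #|S :\ v| = n.+2 by apply: succn_inj; rewrite cardSv.
    move=> connCSv; apply: cograph_cut_vertex_compl sg cog vS conn _ connC => connSv.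
    exact: IHv connSv connCSv.
  exact: cograph_cut_vertex_compl (compl_simple sg) (compl_cograph sg cog) vS connC
    disconnectedCSv (connected_in_complK irr conn).
Qed.

End Cographs.

Section Domination.
Variable T : finType.
Implicit Types (e : rel T) (S D : {set T}).

Lemma dominatingP e S D :
  reflect (D \subset S /\ forall x, x \in S -> x \notin D -> exists2 y, y \in D & e x y)
          (dominating e S D).
Proof.
apply: (iffP andP) => -[DS dom]; split => //.
  move=> x xS xD; move/forall_inP/(_ x xS): dom; rewrite (negbTE xD).
  by case/exists_inP => y; exists y.
apply/forall_inP => x xS; case: (boolP (x \in D)) => //= xD.
by have [y yD exy] := dom x xS xD; apply/exists_inP; exists y.
Qed.

Lemma dominating_refl e S : dominating e S S.
Proof. by apply/dominatingP; split=> // x ->. Qed.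

Lemma gamma_le e S D : dominating e S D -> gamma e S <= #|D|.
Proof. by move=> domD; rewrite /gamma -minEnat; exact: (bigmin_le_cond (T := nat) _ _ domD). Qed.

Lemma mds_exists e S : exists2 D, dominating e S D & #|D| = gamma e S.
Proof.
have card_dominating D : dominating e S D -> #|D| <= #|S|.
  by case/andP => /subset_leq_card.
rewrite /gamma -minEnat.
have [D domD ->] := eq_bigmin (T := nat) _ _ (fun D : {set T} => #|D|)
  (dominating_refl e S) card_dominating.
by exists D.
Qed.

Lemma mem_core_mds e S D v :
  v \in core e S -> dominating e S D -> #|D| = gamma e S -> v \in D.
Proof.
rewrite inE => /andP[_ /forallP/(_ D)/implyP core_v] domD cardD.
by apply: core_v; rewrite /mds domD cardD eqxx.
Qed.

Lemma gamma_gt0 e S x : x \in S -> 0 < gamma e S.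
Proof.
move=> xS; have [D /dominatingP[_ dom] <-] := mds_exists e S; apply/card_gt0P.
by case: (boolP (x \in D)) => [|xD]; [exists x | have [y] := dom x xS xD; exists y].
Qed.

Lemma gamma_eq1 e S u : dominating e S [set u] -> gamma e S = 1.
Proof.
move=> domu; apply/eqP; rewrite eqn_leq -(cards1 u) gamma_le // cards1.
apply: (gamma_gt0 e (_ : u \in S)).
by case/dominatingP: domu; rewrite sub1set.
Qed.

Lemma gamma_gt1 e S x :
  x \in S -> (forall u, ~ dominating e S [set u]) -> 1 < gamma e S.
Proof.
move=> xS nodom; have [D domD cardD] := mds_exists e S.
rewrite ltn_neqAle (gamma_gt0 e xS) andbT -cardD.
by rewrite eq_sym; apply/negP => /cards1P[u Du]; apply: (nodom u); rewrite -Du.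
Qed.

Lemma dominating_setD1 e S D u :
  u \in S -> dominating e (S :\ u) D -> (exists2 y, y \in D & e u y) ->
  dominating e S D.
Proof.
move=> uS /dominatingP[DSu dom] adj_u; apply/dominatingP; split.
  by apply: subset_trans DSu (subD1set S u).
move=> x xS xD; case: (eqVneq x u) => [-> //|xu].
by apply: dom; rewrite ?in_setD1 ?xu.
Qed.

Lemma gamma_setD1_universal e u : symmetric e -> 1 < #|T| ->
  dominating e [set: T] [set u] -> u \in core e [set: T] -> 1 < gamma e ([set: T] :\ u).
Proof.
move=> sym T2 domu ucore.
have [x xTu] : exists x, x \in [set: T] :\ u.
  by apply/set0Pn; rewrite -card_gt0 -ltnS; move: T2; rewrite -cardsT (cardsD1 u) in_setT.
apply: (gamma_gt1 xTu) => y domy.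
have /setD1P[yu _] : y \in [set: T] :\ u by case/dominatingP: domy; rewrite sub1set.
have euy : e u y.
  case/dominatingP: domu => _ /(_ y (in_setT y)); rewrite in_set1 yu.
  by case/(_ erefl) => z /set1P-> eyu; rewrite sym.
have domyT : dominating e [set: T] [set y].
  by apply: dominating_setD1 (in_setT u) domy _; exists y; rewrite ?set11.
have := mem_core_mds ucore domyT; rewrite cards1 (gamma_eq1 domu) in_set1 => /(_ erefl).
by rewrite eq_sym (negbTE yu).
Qed.

End Domination.

Section CompleteCut.
Variable T : finType.
Implicit Types (e : rel T) (C : {set T}).

Definition complete_cut e C := forall x y, x \in C -> y \notin C -> e x y.

Lemma complete_cutC e C : symmetric e -> complete_cut e C -> complete_cut e (~: C).
Proof. by move=> sym cut x y; rewrite !inE negbK sym => xC yC; apply: cut. Qed.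

Lemma compl_disconnected_complete_cut e :
  ~ connected_in (compl_rel e) [set: T] ->
  exists C a c, [/\ a \in C, c \notin C & complete_cut e C].
Proof.
case/disconnected_pair => a [c [_ _ nac]].
exists [set u | connect (induced (compl_rel e) [set: T]) a u], a, c.
split; rewrite ?inE ?connect0 // => x y; rewrite !inE => cax; apply: contraNT => nexy.
have [<- // | xy] := eqVneq x y.
by apply: component_closed cax _ _; rewrite ?in_setT // /compl_rel xy.
Qed.

Lemma complete_cut_pair_dominating e C x y : symmetric e ->
  complete_cut e C -> x \in C -> y \notin C -> dominating e [set: T] [set x; y].
Proof.
move=> sym cut xC yC; apply/dominatingP; split=> [|z _ _]; first exact: subsetT.
case: (boolP (z \in C)) => zC; first by exists y; rewrite ?set22 ?cut.
by exists x; rewrite ?set21 // sym cut.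
Qed.

Lemma complete_cut_avoid e C x v : symmetric e ->
  complete_cut e C -> x \in C -> (forall u, ~ dominating e [set: T] [set u]) ->
  exists2 a, a \in C & a != v.
Proof.
move=> sym cut xC nodom; case: (pickP [pred a | (a \in C) && (a != v)]).
  by move=> a /andP[aC av]; exists a.
move=> onlyv; have vC : v \in C by have /= := onlyv x; rewrite xC => /negbFE/eqP<-.
exfalso; apply: (nodom v); apply/dominatingP; split=> [|z _]; first exact: subsetT.
rewrite in_set1 => zv; exists v; rewrite ?set11 // sym cut //.
by apply/negP => zC; have /= := onlyv z; rewrite zC zv.
Qed.

Lemma core_complete_cut e C a c : symmetric e ->
  complete_cut e C -> a \in C -> c \notin C ->
  (forall u, ~ dominating e [set: T] [set u]) -> core e [set: T] = set0.
Proof.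
move=> sym cut aC cC nodom.
have cut_neq x y : x \in C -> y \notin C -> x != y by move=> xC; apply: contraNneq => <-.
have gamma2 : gamma e [set: T] = 2.
  apply/eqP; rewrite eqn_leq (gamma_gt1 (in_setT a) nodom) andbT.
  apply: leq_trans (gamma_le (complete_cut_pair_dominating sym cut aC cC)) _.
  by rewrite cards2 cut_neq.
apply/setP => v; rewrite in_set0; apply/negP => vcore.
have [a' a'C a'v] := complete_cut_avoid v sym cut aC nodom.
have cC' : c \in ~: C by rewrite inE.
have [c' + c'v] := complete_cut_avoid v sym (complete_cutC sym cut) cC' nodom.
rewrite inE => c'C.
have := mem_core_mds vcore (complete_cut_pair_dominating sym cut a'C c'C).
rewrite cards2 cut_neq // gamma2 !inE => /(_ erefl).
by rewrite eq_sym (negbTE a'v) eq_sym (negbTE c'v).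
Qed.

End CompleteCut.

Theorem proposition3 (T : finType) (e : rel T) :
  simple_graph e -> cograph e -> connected_graph e -> 2 <= #|T| ->
  #|core e [set: T]| <= 1 /\
  (forall w : T, core e [set: T] = [set w] ->
     gamma e [set: T] < gamma e ([set: T] :\ w)).
Proof.
move=> sg cog conn T2; have [_ sym] := sg.
have connT : connected_in e [set: T].
  by move=> x y _ _; rewrite (eq_connect (induced_setT e)).
have T2' : 1 < #|[set: T]| by rewrite cardsT.
have [C [a [c [aC cC cut]]]] := compl_disconnected_complete_cut
  (cograph_connected_compl_disconnected sg cog T2' connT).
case: (pickP (fun u => dominating e [set: T] [set u])) => [u domu | nodom].
  have gamma1 := gamma_eq1 domu.
  have core_u : core e [set: T] \subset [set u].
    by apply/subsetP => v vcore; apply: mem_core_mds vcore domu _; rewrite cards1 gamma1.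
  split=> [|w core_w]; first by rewrite (leq_trans (subset_leq_card core_u)) ?cards1.
  have wu : w = u by apply/set1P; rewrite -sub1set -core_w.
  by rewrite wu gamma1 gamma_setD1_universal // -wu core_w set11.
have core0 := core_complete_cut sym cut aC cC (fun u => negP (negbT (nodom u))).
split=> [|w]; first by rewrite core0 cards0.
by rewrite core0 => /setP/(_ w); rewrite !inE eqxx.
Qed.
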